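(* Let $n_1,n_2,m_1,m_2$ be positive integers with $\gcd(n_1,n_2)=\gcd(m_1,m_2)=1$. If $f_1:\mathcal{D}(n_1)\to\mathcal{D}(m_1)$ and $f_2:\mathcal{D}(n_2)\to\mathcal{D}(m_2)$ are reducing, then so is $f_1f_2:\mathcal{D}(n_1n_2)\to\mathcal{D}(m_1m_2)$, defined by $(f_1f_2)(d_1d_2)=f_1(d_1)f_2(d_2)$ for $d_1\in\mathcal{D}(n_1)$, $d_2\in\mathcal{D}(n_2)$.
   Context: For a positive integer $n$, $\mathcal{D}(n)$ is the set of positive divisors of $n$, and $\lambda(n)$ is the least prime factor of $n$ if $n\ge2$, with $\lambda(1)=1$. For positive integers $m,n$, a function $f:\mathcal{D}(n)\to\mathcal{D}(m)$ is called reducing if for all $d,d'\in\mathcal{D}(n)$: (a) $f(d)\le d$; (b) $\frac{m/f(d)}{n/d}\le\min\{1,\ \lambda(m/f(d))/\lambda(n/d)\}$; (c) if $f(d)=2^if(d')$ for some $i\in\mathbb{Z}$, then $d=2^jd'$ for some $j\in\mathbb{Z}$. *)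

From mathcomp Require Import all_boot all_order all_algebra.
Set Implicit Arguments. Unset Strict Implicit. Unset Printing Implicit Defensive.
Import Order.TTheory GRing.Theory Num.Theory.

Definition lpf (n : nat) : nat := if 2 <= n then pdiv n else 1.

(* f : D(n) -> D(m) is represented by a function nat -> nat that maps
   every positive divisor of n to a (positive) divisor of m. *)
Definition maps_divisors (n m : nat) (f : nat -> nat) : Prop :=
  forall d, d %| n -> f d %| m.

Local Open Scope ring_scope.

Definition reducing (n m : nat) (f : nat -> nat) : Prop :=
  maps_divisors n m f /\
  forall d d' : nat, (d %| n)%N -> (d' %| n)%N ->
    [/\ (f d <= d)%N,
        ((m %/ f d)%:R / (n %/ d)%:R : rat)
          <= Num.min 1 ((lpf (m %/ f d))%:R / (lpf (n %/ d))%:R)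
      & (exists i : int, (f d)%:R = (2%:R : rat) ^ i * (f d')%:R) ->
        exists j : int, (d%:R : rat) = 2%:R ^ j * d'%:R].

(* The product function f1 f2 on D(n1 n2): a divisor d of n1 n2 (gcd n1 n2 = 1)
   is uniquely d = d1 d2 with d1 = gcd(d,n1) | n1, d2 = gcd(d,n2) | n2. *)
Definition prod_fun (n1 n2 : nat) (f1 f2 : nat -> nat) (d : nat) : nat :=
  (f1 (gcdn d n1) * f2 (gcdn d n2))%N.

From mathcomp Require Import all_boot all_order all_algebra.
Import GRing.Theory Num.Theory Order.TTheory.

Set Implicit Arguments.
Unset Strict Implicit.
Unset Printing Implicit Defensive.

(* Divisors of n1 n2 and of m1 m2 split uniquely into coprime factors, so the
   three conditions can be checked factorwise.  (a) multiplies.  For (b), put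
   a_i = m_i/f_i(d_i) and b_i = n_i/d_i; the least prime p of a1 a2 divides,
   say, a1, so a1 a2 lambda(b1 b2) <= a2 a1 lambda(b1) <= a2 lambda(a1) b1
   <= p b1 b2.  For (c), x = 2^i y means that x and y have the same odd part,
   and the odd part of a product of coprime factors determines the odd parts
   of the factors. *)

(* Also for n = 0, 1: pdiv returns 1 there. *)
Lemma lpfE n : lpf n = pdiv n.
Proof. by rewrite /lpf; case: n => [|[|n]]. Qed.

Lemma ler_ratio_min1E (x y p q : nat) : 0 < y -> 0 < q ->
  ((x%:R / y%:R : rat) <= Num.min 1 (p%:R / q%:R))%R =
  (x <= y) && (x * q <= p * y).
Proof.
rewrite -!(ltr0n rat) => y_gt0 q_gt0.
rewrite le_min ler_pdivrMr // mul1r ler_nat.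
by rewrite ler_pdivrMr // mulrAC ler_pdivlMr // -!natrM ler_nat.
Qed.

Lemma pdiv_ratio_mul a1 a2 b1 b2 : 0 < b1 -> 0 < b2 ->
  a1 <= b1 -> a1 * pdiv b1 <= pdiv a1 * b1 ->
  a2 <= b2 -> a2 * pdiv b2 <= pdiv a2 * b2 ->
  a1 * a2 * pdiv (b1 * b2) <= pdiv (a1 * a2) * (b1 * b2).
Proof.
move=> b1_gt0 b2_gt0 le_ab1 ratio1 le_ab2 ratio2.
have b_gt0 : 0 < b1 * b2 by rewrite muln_gt0 b1_gt0.
have [a_gt1 | a_le1] := ltnP 1 (a1 * a2); last first.
  have -> : pdiv (a1 * a2) = 1 by case: (a1 * a2) a_le1 => [|[]].
  by rewrite mul1n (leq_trans (leq_mul a_le1 (pdiv_leq b_gt0))) ?mul1n.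
have p_prime := pdiv_prime a_gt1.
wlog p_dvd_a1 : a1 a2 b1 b2 b1_gt0 b2_gt0 le_ab1 ratio1 le_ab2 ratio2
  b_gt0 a_gt1 p_prime / pdiv (a1 * a2) %| a1.
  move=> wlog_hyp; have := pdiv_dvd (a1 * a2).
  rewrite Euclid_dvdM // => /orP[]; first exact: wlog_hyp.
  by rewrite mulnC [b1 * b2]mulnC; apply: wlog_hyp; rewrite // mulnC.
have a1_gt1 : 1 < a1.
  apply: leq_trans (prime_gt1 p_prime) (dvdn_leq _ p_dvd_a1).
  by move: (ltnW a_gt1); rewrite muln_gt0 => /andP[].
have pa1_le : pdiv a1 <= pdiv (a1 * a2) by apply: pdiv_min_dvd; rewrite ?prime_gt1.
have pb_le : pdiv (b1 * b2) <= pdiv b1.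
  apply: pdiv_min_dvd; first exact/prime_gt1/pdiv_prime/(leq_trans a1_gt1).
  exact/dvdn_mulr/pdiv_dvd.
apply: (leq_trans (leq_mul (leqnn _) pb_le)).
rewrite mulnAC (leq_trans (leq_mul ratio1 le_ab2)) // -mulnA.
exact: leq_mul pa1_le (leqnn _).
Qed.

Lemma lpf_ratio_mul (a1 a2 b1 b2 : nat) : 0 < b1 -> 0 < b2 ->
  ((a1%:R / b1%:R : rat) <= Num.min 1 ((lpf a1)%:R / (lpf b1)%:R))%R ->
  ((a2%:R / b2%:R : rat) <= Num.min 1 ((lpf a2)%:R / (lpf b2)%:R))%R ->
  (((a1 * a2)%:R / (b1 * b2)%:R : rat)
     <= Num.min 1 ((lpf (a1 * a2))%:R / (lpf (b1 * b2))%:R))%R.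
Proof.
move=> b1_gt0 b2_gt0; rewrite !lpfE !ler_ratio_min1E ?pdiv_gt0 ?muln_gt0 ?b1_gt0 //.
move=> /andP[le_ab1 ratio1] /andP[le_ab2 ratio2].
by rewrite leq_mul //= pdiv_ratio_mul.
Qed.

Lemma divnMM a b x y : 0 < a -> 0 < b -> a %| x -> b %| y ->
  (x * y) %/ (a * b) = (x %/ a) * (y %/ b).
Proof.
move=> a_gt0 b_gt0 /divnK {1}<- /divnK {1}<-.
by rewrite mulnACA mulnK // muln_gt0 a_gt0.
Qed.

Definition two_power_related (x y : nat) : Prop :=
  exists i : int, (x%:R : rat) = (2%:R ^ i * y%:R)%R.

Lemma two_power_related_mul x1 x2 y1 y2 :
  two_power_related x1 y1 -> two_power_related x2 y2 ->
  two_power_related (x1 * x2) (y1 * y2).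
Proof.
move=> [i e1] [j e2]; exists (i + j)%R.
by rewrite !natrM e1 e2 expfzDr ?pnatr_eq0 // mulrACA.
Qed.

Lemma odd_part_pow2Mn k y : 0 < y -> (2 ^ k * y)`_(2^') = y`_(2^').
Proof.
move=> y_gt0; rewrite partnM ?expn_gt0 // part_p'nat ?mul1n //.
by rewrite pnatNK pnatX pnat_id.
Qed.

Lemma two_power_relatedP x y : 0 < x -> 0 < y ->
  two_power_related x y <-> x`_(2^') = y`_(2^').
Proof.
move=> x_gt0 y_gt0; split.
- case=> [[k|k] e].
  + have -> : x = 2 ^ k * y by apply/eqP; rewrite -(eqr_nat rat) natrM natrX e.
    exact: odd_part_pow2Mn.
  + have -> : y = 2 ^ k.+1 * x.
      apply/eqP; rewrite -(eqr_nat rat) natrM natrX e NegzE mulrA.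
      by rewrite -exprnN mulfV ?mul1r // expf_neq0 // pnatr_eq0.
    exact/esym/odd_part_pow2Mn.
- move=> same_odd.
  rewrite -(partnC 2 x_gt0) -(partnC 2 y_gt0) !p_part same_odd.
  exists (Posz (logn 2 x) - Posz (logn 2 y))%R; rewrite !natrM !natrX.
  by rewrite mulrA !exprnP -expfzDr ?pnatr_eq0 // subrK.
Qed.

Lemma gcdn_mul_coprime_dvd d1 d2 n : d1 %| n -> coprime d2 n ->
  gcdn (d1 * d2) n = d1.
Proof.
by move=> d1_dvd co; rewrite gcdnC Gauss_gcdl 1?coprime_sym //; apply/gcdn_idPr.
Qed.

Lemma coprime_factor_unique m1 m2 u1 u2 v1 v2 : coprime m1 m2 ->
  u1 %| m1 -> v1 %| m1 -> u2 %| m2 -> v2 %| m2 ->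
  u1 * u2 = v1 * v2 -> u1 = v1 /\ u2 = v2.
Proof.
move=> co u1_dvd v1_dvd u2_dvd v2_dvd e.
have co21 : coprime m2 m1 by rewrite coprime_sym.
split.
- rewrite -(gcdn_mul_coprime_dvd u1_dvd (coprime_dvdl u2_dvd co21)) e.
  exact: gcdn_mul_coprime_dvd (coprime_dvdl v2_dvd co21).
- rewrite -(gcdn_mul_coprime_dvd u2_dvd (coprime_dvdl u1_dvd co)) mulnC e mulnC.
  exact: gcdn_mul_coprime_dvd (coprime_dvdl v1_dvd co).
Qed.

Lemma dvdn_coprime_mul_decomp n1 n2 d : coprime n1 n2 -> d %| n1 * n2 ->
  exists d1 d2, [/\ d = d1 * d2, d1 %| n1 & d2 %| n2].
Proof.
move=> co d_dvd; exists (gcdn d n1), (gcdn d n2); split; rewrite ?dvdn_gcdr //.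
apply/eqP; rewrite eq_sym eqn_dvd; apply/andP; split.
- rewrite Gauss_dvd ?dvdn_gcdl //.
  exact: coprime_dvdl (dvdn_gcdr _ _) (coprime_dvdr (dvdn_gcdr _ _) co).
- have d_dvd_n2 : d %| gcdn d n1 * n2.
    by rewrite muln_gcdl dvdn_gcd d_dvd dvdn_mulr.
  by rewrite muln_gcdr dvdn_gcd d_dvd_n2 dvdn_mull.
Qed.

Lemma prod_fun_mul n1 n2 f1 f2 d1 d2 : coprime n1 n2 -> d1 %| n1 -> d2 %| n2 ->
  prod_fun n1 n2 f1 f2 (d1 * d2) = f1 d1 * f2 d2.
Proof.
move=> co d1_dvd d2_dvd.
have co_d1 : coprime d1 n2 := coprime_dvdl d1_dvd co.
have co_d2 : coprime d2 n1 by rewrite (coprime_dvdl d2_dvd) // coprime_sym.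
by rewrite /prod_fun gcdn_mul_coprime_dvd // [d1 * d2]mulnC gcdn_mul_coprime_dvd.
Qed.

Lemma two_power_related_coprime_factors m1 m2 u1 u2 v1 v2 :
  0 < m1 -> 0 < m2 -> coprime m1 m2 ->
  u1 %| m1 -> v1 %| m1 -> u2 %| m2 -> v2 %| m2 ->
  two_power_related (u1 * u2) (v1 * v2) ->
  two_power_related u1 v1 /\ two_power_related u2 v2.
Proof.
move=> m1_gt0 m2_gt0 co u1_dvd v1_dvd u2_dvd v2_dvd.
have [u1_gt0 v1_gt0] := (dvdn_gt0 m1_gt0 u1_dvd, dvdn_gt0 m1_gt0 v1_dvd).
have [u2_gt0 v2_gt0] := (dvdn_gt0 m2_gt0 u2_dvd, dvdn_gt0 m2_gt0 v2_dvd).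
have u_gt0 : 0 < u1 * u2 by rewrite muln_gt0 u1_gt0.
have v_gt0 : 0 < v1 * v2 by rewrite muln_gt0 v1_gt0.
move=> /(two_power_relatedP u_gt0 v_gt0); rewrite !partnM // => odd_eq.
have [||||odd_eq1 odd_eq2] := coprime_factor_unique co _ _ _ _ odd_eq;
  try exact: dvdn_trans (dvdn_part _ _) _.
by split; [apply/(two_power_relatedP u1_gt0 v1_gt0)
          | apply/(two_power_relatedP u2_gt0 v2_gt0)].
Qed.

Theorem lemma3p6 (n1 n2 m1 m2 : nat) (f1 f2 : nat -> nat) :
  (0 < n1)%N -> (0 < n2)%N -> (0 < m1)%N -> (0 < m2)%N ->
  coprime n1 n2 -> coprime m1 m2 ->
  reducing n1 m1 f1 -> reducing n2 m2 f2 ->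
  reducing (n1 * n2) (m1 * m2) (prod_fun n1 n2 f1 f2) /\
  (forall d1 d2, d1 %| n1 -> d2 %| n2 ->
     prod_fun n1 n2 f1 f2 (d1 * d2) = f1 d1 * f2 d2).
Proof.
move=> n1_gt0 n2_gt0 m1_gt0 m2_gt0 co_n co_m [maps1 red1] [maps2 red2].
split; last by move=> d1 d2; apply: prod_fun_mul.
split=> [d | d d'].
  move=> /(dvdn_coprime_mul_decomp co_n) [d1 [d2 [-> d1_dvd d2_dvd]]].
  by rewrite prod_fun_mul // dvdn_mul ?maps1 ?maps2.
move=> /(dvdn_coprime_mul_decomp co_n) [d1 [d2 [-> d1_dvd d2_dvd]]].
move=> /(dvdn_coprime_mul_decomp co_n) [e1 [e2 [-> e1_dvd e2_dvd]]].
rewrite !prod_fun_mul //.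
have [le1 ratio1 rel1] := red1 _ _ d1_dvd e1_dvd.
have [le2 ratio2 rel2] := red2 _ _ d2_dvd e2_dvd.
have [f1_dvd f2_dvd] := (maps1 _ d1_dvd, maps2 _ d2_dvd).
have [f1_gt0 f2_gt0] := (dvdn_gt0 m1_gt0 f1_dvd, dvdn_gt0 m2_gt0 f2_dvd).
have [d1_gt0 d2_gt0] := (dvdn_gt0 n1_gt0 d1_dvd, dvdn_gt0 n2_gt0 d2_dvd).
split.
- exact: leq_mul.
- rewrite !divnMM //.
  by apply: lpf_ratio_mul ratio1 ratio2; rewrite divn_gt0 // dvdn_leq.
- move=> /(two_power_related_coprime_factors m1_gt0 m2_gt0 co_m) related.
  have [rel_f1 rel_f2] := related f1_dvd (maps1 _ e1_dvd) f2_dvd (maps2 _ e2_dvd).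
  exact: two_power_related_mul (rel1 rel_f1) (rel2 rel_f2).
Qed.
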